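(* Let $n_b\ge 1$, $d_l\ge 3$, $L\ge 3$, $M\ge 1$ be integers, and let $H$ be a quasi-cyclic SC-LDPC parity-check matrix with parameters $(n_b,d_l,L,M)$ and reuse $T=1$ (as defined in the context). Then, for every choice of the shift values $p_{x,y}$ satisfying the reuse-$1$ condition, the Tanner graph of $H$ contains a cycle of length $6$; in particular its girth is at most $6$.
   Context: Quasi-cyclic SC-LDPC matrix: fix integers $n_b\ge1$ (bit nodes per protograph; one check node per protograph), $d_l\ge 2$, $L\ge1$, $M\ge1$. $H$ is a binary block matrix with $L+d_l-1$ block rows (indexed $x=1,\dots,L+d_l-1$) and $n_bL$ block columns (indexed $y=1,\dots,n_bL$), each block of size $M\times M$. For a block column $y$ put $t(y)=\lceil y/n_b\rceil$. Block $(x,y)$ is the all-zero matrix unless $t(y)\le x\le t(y)+d_l-1$, in which case it equals the circulant permutation matrix $I_{(p_{x,y})}$ for a shift value $p_{x,y}\in\{0,\dots,M-1\}$; here $I_{(p)}$ is the $M\times M$ matrix whose row $r$ ($0\le r\le M-1$) has a single $1$, in column $(r+p)\bmod M$, and zeros elsewhere. Reuse-$T$ condition (periodic time-variant construction with period $T$): $p_{x+T,\,y+Tn_b}=p_{x,y}$ whenever both $(x,y)$ and $(x+T,y+Tn_b)$ are nonzero blocks of $H$; otherwise the shift values are arbitrary. The Tanner graph of $H$ is the bipartite graph with one bit node per column and one check node per row of $H$, a bit node and check node being adjacent iff the corresponding entry of $H$ is $1$. The girth is the length of a shortest cycle in the Tanner graph. *)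

From mathcomp Require Import all_boot.
Set Implicit Arguments. Unset Strict Implicit. Unset Printing Implicit Defensive.

(* Quasi-cyclic SC-LDPC matrix H with parameters (nb, dl, L, M) and shift
   values p : nat -> nat -> nat  (p x y = p_{x,y}, 1-based block indices).
   A check node (row of H) is a pair (x, r): block row x in 1..L+dl-1,
   row r in 0..M-1 of that block.  A bit node (column of H) is a pair (y, c):
   block column y in 1..nb*L, column c in 0..M-1 of that block. *)

Definition tcol (nb y : nat) : nat := (y + nb.-1) %/ nb.

Definition in_blocks (nb dl L x y : nat) : bool :=
  [&& 1 <= x, x <= L + dl - 1, 1 <= y & y <= nb * L].

Definition nz_block (nb dl L x y : nat) : bool :=
  in_blocks nb dl L x y && (tcol nb y <= x <= tcol nb y + dl - 1).

Definition check_node (dl L M : nat) (v : nat * nat) : bool :=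
  [&& 1 <= v.1, v.1 <= L + dl - 1 & v.2 < M].

Definition bit_node (nb L M : nat) (v : nat * nat) : bool :=
  [&& 1 <= v.1, v.1 <= nb * L & v.2 < M].

(* Entry of H at row (x,r), column (y,c): block (x,y) is I_(p x y) if nonzero,
   whose row r has its single 1 in column (r + p x y) mod M. *)
Definition Hentry (nb dl L M : nat) (p : nat -> nat -> nat)
    (row col : nat * nat) : bool :=
  nz_block nb dl L row.1 col.1 && (col.2 == (row.2 + p row.1 col.1) %% M).

Definition shifts_ok (nb dl L M : nat) (p : nat -> nat -> nat) : Prop :=
  forall x y, nz_block nb dl L x y -> p x y < M.

Definition reuse (T nb dl L : nat) (p : nat -> nat -> nat) : Prop :=
  forall x y, nz_block nb dl L x y -> nz_block nb dl L (x + T) (y + T * nb) ->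
    p (x + T) (y + T * nb) = p x y.

(* A cycle in the (bipartite) Tanner graph: distinct check nodes
   cs = [c_0;...;c_(k-1)] and distinct bit nodes bs = [b_0;...;b_(k-1)], k >= 2,
   forming c_0 - b_0 - c_1 - b_1 - ... - c_(k-1) - b_(k-1) - c_0. *)
Definition tanner_cycle (nb dl L M : nat) (p : nat -> nat -> nat)
    (cs bs : seq (nat * nat)) : Prop :=
  let k := size cs in
  [/\ size bs = k, 2 <= k, uniq cs && uniq bs,
      all (check_node dl L M) cs && all (bit_node nb L M) bs &
      forall i, i < k ->
        Hentry nb dl L M p (nth (0,0) cs i) (nth (0,0) bs i) /\
        Hentry nb dl L M p (nth (0,0) cs ((i + 1) %% k)) (nth (0,0) bs i)].

Definition cycle_length (cs : seq (nat * nat)) : nat := 2 * size cs.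

From mathcomp Require Import all_boot.
From mathcomp Require Import zify.

(* Under reuse T = 1 every 6-cycle of the base graph of H lifts to the Tanner
   graph, because the circulant shifts along each block diagonal coincide.

   The theorem takes block rows 2, 3, 4 and protographs 1, 3, 2; by part 2 the
   two alternating sums of shifts are the same three diagonal values. *)

(* The first block column of protograph k+1 (k counted from 0). *)
Definition first_col (nb k : nat) : nat := k * nb + 1.

Section FirstColumns.

Variables nb dl L : nat.
Hypothesis nb_gt0 : 0 < nb.

Lemma tcol_first_col k : tcol nb (first_col nb k) = k.+1.
Proof.
rewrite /tcol /first_col.
have -> : k * nb + 1 + nb.-1 = k.+1 * nb by rewrite mulSn; lia.
by rewrite mulnK.
Qed.

Lemma first_col_inj : injective (first_col nb).
Proof. by move=> k1 k2 /addIn /eqP; rewrite eqn_pmul2r // => /eqP. Qed.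

Lemma nz_block_first_col k x :
  k < L -> k < x <= k + dl -> nz_block nb dl L x (first_col nb k).
Proof.
move=> k_lt_L /andP[k_lt_x x_le].
rewrite /nz_block tcol_first_col /in_blocks /first_col.
have : k.+1 * nb <= L * nb by rewrite leq_mul2r k_lt_L orbT.
rewrite mulSn; nia.
Qed.

Lemma reuse1_diagonal_shift (p : nat -> nat -> nat) :
  reuse 1 nb dl L p ->
  forall k x, k < L -> 0 < x <= dl -> p (k + x) (first_col nb k) = p x (first_col nb 0).
Proof.
move=> reuse1; elim=> [//|k IHk] x k1_lt_L x_band.
have k_lt_L : k < L by apply: ltnW.
have -> : k.+1 + x = k + x + 1 by rewrite addn1 addSn.
have -> : first_col nb k.+1 = first_col nb k + 1 * nb by rewrite /first_col mulSn; lia.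
rewrite reuse1 ?IHk //; first by apply: nz_block_first_col => //; lia.
have -> : first_col nb k + 1 * nb = first_col nb k.+1 by rewrite /first_col mulSn; lia.
by apply: nz_block_first_col => //; lia.
Qed.

End FirstColumns.

Definition mod_diff (M a b : nat) : nat := (a + (M - b %% M)) %% M.

Lemma mod_diffK M a b : 0 < M -> mod_diff M a b + b = a %[mod M].
Proof.
move=> M_gt0; rewrite /mod_diff modnDml.
have -> : a + (M - b %% M) + b = (b %/ M).+1 * M + a.
  by have := ltn_pmod b M_gt0; rewrite {3}(divn_eq b M) mulSn; lia.
by rewrite modnMDl.
Qed.

(* Closing the walk of a would-be 6-cycle: if the rows r2, r3 were chosen so
   that consecutive entries match modulo M, a balanced shift sum makes the
   last column agree with the one reached from the starting row 0. *)
Lemma balanced_walk_closes M r2 r3 p11 p21 p22 p32 p33 p13 :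
  (r2 + p21) %% M = p11 %% M -> (r3 + p32) %% M = (r2 + p22) %% M ->
  p11 + p22 + p33 = p21 + p32 + p13 %[mod M] ->
  (r3 + p33) %% M = p13 %% M.
Proof.
move=> e2 e3 balance; apply/eqP; rewrite -(eqn_modDr (p21 + p32)).
have -> : r3 + p33 + (p21 + p32) = (r3 + p32) + (p33 + p21) by lia.
rewrite -modnDml e3 modnDml.
have -> : r2 + p22 + (p33 + p21) = (r2 + p21) + (p22 + p33) by lia.
rewrite -modnDml e2 modnDml addnA balance.
by apply/eqP; congr (_ %% M); lia.
Qed.

Section SixCycle.

Variables (nb dl L M : nat) (p : nat -> nat -> nat).
Hypothesis M_gt0 : 0 < M.

(* Six nonzero circulant blocks closing up in the base graph, with balanced
   shifts, yield a Tanner cycle of length 6: starting from row 0 of block row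
   x1, each next row/column is forced modulo M, and the balance condition is
   exactly what makes the walk return to its start. *)
Lemma six_cycle_of_balanced_blocks (x1 x2 x3 y1 y2 y3 : nat) :
  uniq [:: x1; x2; x3] -> uniq [:: y1; y2; y3] ->
  nz_block nb dl L x1 y1 -> nz_block nb dl L x2 y1 ->
  nz_block nb dl L x2 y2 -> nz_block nb dl L x3 y2 ->
  nz_block nb dl L x3 y3 -> nz_block nb dl L x1 y3 ->
  p x1 y1 + p x2 y2 + p x3 y3 = p x2 y1 + p x3 y2 + p x1 y3 %[mod M] ->
  exists cs bs, tanner_cycle nb dl L M p cs bs /\ cycle_length cs = 6.
Proof.
move=> ux uy n11 n21 n22 n32 n33 n13 balance.
set s1 := p x1 y1 %% M.
set r2 := mod_diff M s1 (p x2 y1).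
set s2 := (r2 + p x2 y2) %% M.
set r3 := mod_diff M s2 (p x3 y2).
set s3 := (r3 + p x3 y3) %% M.
have e2 : (r2 + p x2 y1) %% M = s1 by rewrite mod_diffK // modn_mod.
have e3 : (r3 + p x3 y2) %% M = s2 by rewrite mod_diffK // modn_mod.
have closing : s3 = p x1 y3 %% M :=
  balanced_walk_closes _ _ _ (p x1 y1) _ _ _ _ _ e2 e3 balance.
exists [:: (x1, 0); (x2, r2); (x3, r3)], [:: (y1, s1); (y2, s2); (y3, s3)].
split=> //; split=> //.
- by apply/andP; split; apply: (map_uniq (f := fst)).
- (* row and column indices are valid because the six blocks lie inside H *)
  rewrite /= /check_node /bit_node /= M_gt0 !ltn_pmod //.
  case/andP: n11 => /and4P[-> -> -> ->] _; case/andP: n22 => /and4P[-> -> -> ->] _.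
  by case/andP: n33 => /and4P[-> -> -> ->].
- case=> [|[|[|//]]] _; rewrite /Hentry /=.
  + by rewrite n11 n21 add0n e2 !eqxx.
  + by rewrite n22 n32 e3 !eqxx.
  + by rewrite n33 n13 add0n -closing !eqxx.
Qed.

End SixCycle.

Theorem lemma1 (nb dl L M : nat) (p : nat -> nat -> nat) :
  1 <= nb -> 3 <= dl -> 3 <= L -> 1 <= M ->
  shifts_ok nb dl L M p ->
  reuse 1 nb dl L p ->
  exists cs bs : seq (nat * nat),
    tanner_cycle nb dl L M p cs bs /\ cycle_length cs = 6.
Proof.
move=> nb_gt0 dl_ge3 L_ge3 M_gt0 _ reuse1.
set col := first_col nb.
have nz k x : k < L -> k < x <= k + dl -> nz_block nb dl L x (col k).
  exact: nz_block_first_col.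
have diag k x : k < L -> 0 < x <= dl -> p (k + x) (col k) = p x (col 0).
  exact: reuse1_diagonal_shift.
apply: (@six_cycle_of_balanced_blocks nb dl L M p M_gt0 2 3 4 (col 0) (col 2) (col 1)).
- by [].
- by rewrite /= !inE !(inj_eq (@first_col_inj nb nb_gt0)).
- 1-6: by apply: nz => //; lia.
have e1 : p 3 (col 2) = p 1 (col 0) by apply: (diag 2 1); lia.
have e2 : p 4 (col 2) = p 2 (col 0) by apply: (diag 2 2); lia.
have e3 : p 4 (col 1) = p 3 (col 0) by apply: (diag 1 3); lia.
have e4 : p 2 (col 1) = p 1 (col 0) by apply: (diag 1 1); lia.
by rewrite e1 e2 e3 e4; congr (_ %% M); lia.
Qed.
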